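(* Let $\vec B$ be a measurement assemblage on $\mathcal H$ and let $\rho_B$ be a density operator on $\mathcal H$ such that $\mathbb{SR}(\rho_B^{1/2}\vec B\rho_B^{1/2})=\mathbb{IR}(\vec B)=:t^*$. Then there exist a state assemblage $\vec\xi$ and a state assemblage $\vec\tau\in\mathbb{LHS}$, both with reduced state $\rho_B$ (i.e. $\sum_a\xi_{a|x}=\sum_a\tau_{a|x}=\rho_B$ for all $x$), such that $(\rho_B^{1/2}B_{a|x}\rho_B^{1/2}+t^*\xi_{a|x})/(1+t^* )=\tau_{a|x}$ for all $a,x$; i.e. $(t^*,\vec\xi,\vec\tau)$ is an optimal solution in the definition of $\mathbb{SR}(\rho_B^{1/2}\vec B\rho_B^{1/2})$ whose noise and LHS terms have the same reduced state as $\rho_B^{1/2}\vec B\rho_B^{1/2}$.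
   Context: All Hilbert spaces are finite-dimensional. A measurement assemblage (MA) on $\mathcal H$ is a family $\vec M=\{M_{a|x}\}_{a,x}$, with $x$ ranging over a finite input set and $a$ over a finite outcome set $\mathcal A$, such that for each $x$, $\{M_{a|x}\}_a$ is a POVM ($M_{a|x}\ge 0$, $\sum_a M_{a|x}=\mathbb 1$). $\vec M$ is jointly measurable, written $\vec M\in\mathbb{JM}$, if there exist a finite POVM $\{G_\lambda\}_\lambda$ and conditional probability distributions $p(a|x,\lambda)$ with $M_{a|x}=\sum_\lambda p(a|x,\lambda)G_\lambda$ for all $a,x$. A state assemblage (SA) on $\mathcal H$ is a family $\vec\sigma=\{\sigma_{a|x}\}_{a,x}$ of positive semidefinite operators such that $\sum_a\sigma_{a|x}=\rho$ is independent of $x$ and $\mathrm{tr}\rho=1$; $\rho$ is called its reduced state. $\vec\sigma$ admits a local hidden state model, written $\vec\sigma\in\mathbb{LHS}$, if $\sigma_{a|x}=\sum_\lambda p(\lambda)p(a|x,\lambda)\rho_\lambda$ for some finite probability distribution $p(\lambda)$, conditional distributions $p(a|x,\lambda)$ and density operators $\rho_\lambda$. The incompatibility robustness is $\mathbb{IR}(\vec M)=\min\{t\ge0:\exists$ MA $\vec N$ and $\vec D\in\mathbb{JM}$ with $(M_{a|x}+tN_{a|x})/(1+t)=D_{a|x}\ \forall a,x\}$. The steering robustness is $\mathbb{SR}(\vec\sigma)=\min\{t\ge0:\exists$ SA $\vec\xi$ and $\vec\tau\in\mathbb{LHS}$ with $(\sigma_{a|x}+t\xi_{a|x})/(1+t)=\tau_{a|x}\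 \forall a,x\}$. For a density operator $\rho$ and an MA $\vec B$ on the same space, $\rho^{1/2}\vec B\rho^{1/2}$ denotes the SA $\{\rho^{1/2}B_{a|x}\rho^{1/2}\}_{a,x}$, whose reduced state is $\rho$. *)

(* Finite-dimensional Hilbert space = C^d with C = R[i],
   R an arbitrary realType (a model of the real numbers). *)
From HB Require Import structures.
From mathcomp Require Import all_boot all_order all_algebra.
From mathcomp Require Import reals complex.
Set Implicit Arguments. Unset Strict Implicit. Unset Printing Implicit Defensive.
Import Order.TTheory GRing.Theory Num.Theory.
Local Open Scope ring_scope.
Local Open Scope complex_scope.

Section QDefs.
Variable R : realType.
Local Notation C := (R[i]).

Definition adj m n (A : 'M[C]_(m, n)) : 'M[C]_(n, m) := (map_mx Num.conj A)^T.

Definition psd d (A : 'M[C]_d) : Prop :=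
  A = adj A /\ forall v : 'cV[C]_d, 0 <= (adj v *m A *m v) 0 0.

Definition density d (rho : 'M[C]_d) : Prop := psd rho /\ \tr rho = 1.

Definition MA d nx na (M : 'I_nx -> 'I_na -> 'M[C]_d) : Prop :=
  (forall x a, psd (M x a)) /\ (forall x, \sum_a M x a = 1%:M).

(* conditional distribution p(a|x,l) stored as p x l a *)
Definition cond_distr nx k na (p : 'I_nx -> 'I_k -> 'I_na -> R) : Prop :=
  (forall x l a, 0 <= p x l a) /\ (forall x l, \sum_a p x l a = 1).

Definition JM d nx na (M : 'I_nx -> 'I_na -> 'M[C]_d) : Prop :=
  exists (k : nat) (G : 'I_k -> 'M[C]_d) (p : 'I_nx -> 'I_k -> 'I_na -> R),
    [/\ (forall l, psd (G l)), \sum_l G l = 1%:M, cond_distr p &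
        forall x a, M x a = \sum_l (p x l a)%:C *: G l].

Definition SA_with d nx na (sigma : 'I_nx -> 'I_na -> 'M[C]_d) (rho : 'M[C]_d) : Prop :=
  [/\ forall x a, psd (sigma x a), forall x, \sum_a sigma x a = rho & \tr rho = 1].

Definition SA d nx na (sigma : 'I_nx -> 'I_na -> 'M[C]_d) : Prop :=
  exists rho, SA_with sigma rho.

Definition is_LHS d nx na (sigma : 'I_nx -> 'I_na -> 'M[C]_d) : Prop :=
  exists (k : nat) (pl : 'I_k -> R) (p : 'I_nx -> 'I_k -> 'I_na -> R)
         (rhol : 'I_k -> 'M[C]_d),
    [/\ (forall l, 0 <= pl l), \sum_l pl l = 1, cond_distr p,
        (forall l, density (rhol l)) &
        forall x a, sigma x a = \sum_l (pl l * p x l a)%:C *: rhol l].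

Definition mixt d (t : R) (A B : 'M[C]_d) : 'M[C]_d :=
  ((1 + t)^-1)%:C *: (A + t%:C *: B).

Definition IR_feasible d nx na (M : 'I_nx -> 'I_na -> 'M[C]_d) (t : R) : Prop :=
  0 <= t /\ exists N D, [/\ MA N, JM D & forall x a, mixt t (M x a) (N x a) = D x a].

Definition is_IR d nx na (M : 'I_nx -> 'I_na -> 'M[C]_d) (t : R) : Prop :=
  IR_feasible M t /\ forall t', IR_feasible M t' -> t <= t'.

Definition SR_feasible d nx na (sigma : 'I_nx -> 'I_na -> 'M[C]_d) (t : R) : Prop :=
  0 <= t /\ exists xi tau,
    [/\ SA xi, SA tau, is_LHS tau & forall x a, mixt t (sigma x a) (xi x a) = tau x a].

Definition is_SR d nx na (sigma : 'I_nx -> 'I_na -> 'M[C]_d) (t : R) : Prop :=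
  SR_feasible sigma t /\ forall t', SR_feasible sigma t' -> t <= t'.

(* rho^{1/2} B rho^{1/2}, given S = rho^{1/2} *)
Definition sandwich d nx na (S : 'M[C]_d) (B : 'I_nx -> 'I_na -> 'M[C]_d) :
  'I_nx -> 'I_na -> 'M[C]_d := fun x a => S *m B x a *m S.

End QDefs.

(* The incompatibility-robustness optimum (N, D) for B is mapped to the steering
   problem by the completely positive map X |-> S X S with S = rho_B^{1/2}.  It sends
   POVMs to state assemblages with reduced state S 1 S = rho_B, and a joint POVM
   {G_l} with response functions p to the LHS model with weights tr(S G_l S) and
   hidden states S G_l S / tr(S G_l S).  Since the map commutes with the mixing
   (A + t N)/(1 + t), the sandwiched pair solves the steering problem at level t. *)
From HB Require Import structures.
From mathcomp Require Import all_boot all_order all_algebra.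
From mathcomp Require Import reals complex.
Set Implicit Arguments. Unset Strict Implicit. Unset Printing Implicit Defensive.
Import Order.TTheory GRing.Theory Num.Theory.
Local Open Scope ring_scope.
Local Open Scope complex_scope.

Section Assemblages.
Variable R : realType.
Local Notation C := (R[i]).

Lemma adjM m n p (A : 'M[C]_(m, n)) (B : 'M[C]_(n, p)) :
  adj (A *m B) = adj B *m adj A.
Proof. by rewrite /adj map_mxM trmx_mul. Qed.

Lemma adjD m n (A B : 'M[C]_(m, n)) : adj (A + B) = adj A + adj B.
Proof. by rewrite /adj map_mxD linearD. Qed.

Lemma adjZ m n c (A : 'M[C]_(m, n)) : adj (c *: A) = Num.conj c *: adj A.
Proof. by rewrite /adj map_mxZ linearZ. Qed.

Lemma adj_delta m n i j : adj (delta_mx i j : 'M[C]_(m, n)) = delta_mx j i.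
Proof.
apply/matrixP => k l; rewrite !mxE andbC.
by case: (_ && _); rewrite /= ?rmorph0 ?rmorph1.
Qed.

Lemma delta_form_sum d (A : 'M[C]_d) i j :
  \sum_k ((delta_mx 0 i : 'rV[C]_d) *m A) 0 k * (delta_mx j 0 : 'cV[C]_d) k 0
  = A i j.
Proof.
transitivity (((delta_mx 0 i : 'rV[C]_d) *m A *m (delta_mx j 0 : 'cV[C]_d)) 0 0).
  by rewrite [RHS]mxE.
by rewrite -rowE -colE !mxE.
Qed.

Lemma psd_diag_ge0 d (A : 'M[C]_d) i : psd A -> 0 <= A i i.
Proof.
case=> _ /(_ (delta_mx i 0)).
by rewrite adj_delta mxE delta_form_sum.
Qed.

Lemma psd_mxtrace_ge0 d (A : 'M[C]_d) : psd A -> 0 <= \tr A.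
Proof. by move=> psdA; apply: sumr_ge0 => i _; apply: psd_diag_ge0. Qed.

Lemma psd0 d : psd (0 : 'M[C]_d).
Proof.
split; first by apply/matrixP => i j; rewrite !mxE conjC0.
by move=> v; rewrite mulmx0 mul0mx mxE.
Qed.

Lemma psdD d (A B : 'M[C]_d) : psd A -> psd B -> psd (A + B).
Proof.
case=> hA pA [hB pB]; split; first by rewrite adjD -hA -hB.
by move=> v; rewrite mulmxDr mulmxDl mxE addr_ge0.
Qed.

Lemma psdZ d (c : R) (A : 'M[C]_d) : 0 <= c -> psd A -> psd (c%:C *: A).
Proof.
move=> c_ge0 [hA pA]; split; first by rewrite adjZ geC0_conj ?ler0c -?hA.
by move=> v; rewrite -scalemxAr -scalemxAl mxE mulr_ge0 // ler0c.
Qed.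

Lemma psd_sandwich d (S X : 'M[C]_d) : psd S -> psd X -> psd (S *m X *m S).
Proof.
case=> hS _ [hX pX]; split; first by rewrite !adjM -hS -hX mulmxA.
by move=> v; have := pX (S *m v); rewrite adjM -hS !mulmxA.
Qed.

Lemma conjNconjC (x : C) : Num.conj (- Num.conj x) = - x.
Proof. by rewrite (rmorphN Num.conj); congr (- _); apply: conjCK. Qed.

Lemma psd_mxtrace_eq0 d (A : 'M[C]_d) : psd A -> \tr A = 0 -> A = 0.
Proof.
move=> psdA trA0.
have diag0 i : A i i = 0.
  by apply: (psumr_eq0P _ trA0) => // j _; apply: psd_diag_ge0.
have herm i j : A j i = Num.conj (A i j) by rewrite {1}psdA.1 !mxE.
apply/matrixP => i j; rewrite mxE.
have [<- | _] := eqVneq i j; first exact: diag0.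
set a := A i j.
(* test the form on e_i - conj(a) e_j, which yields -2 |a|^2 >= 0 *)
have := psdA.2 (delta_mx i 0 + (- Num.conj a) *: delta_mx j 0).
rewrite adjD adjZ !adj_delta !(mulmxDl, mulmxDr) -!(scalemxAl, scalemxAr).
rewrite !mxE !delta_form_sum !diag0 herm -/a conjNconjC.
rewrite !(mulr0, addr0, add0r) !mulNr -opprD oppr_ge0 [X in _ + X]mulrC => le0.
have : a * Num.conj a == 0.
  rewrite eq_le mul_conjC_ge0 andbT (le_trans _ le0) //.
  by rewrite lerDl mul_conjC_ge0.
by rewrite mul_conjC_eq0 => /eqP.
Qed.

Lemma mxtrace_psd_real d (A : 'M[C]_d) : psd A -> \tr A = (complex.Re (\tr A))%:C.
Proof.
move/psd_mxtrace_ge0 => /ger0_Im.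
by case: (\tr A) => u v /= ->.
Qed.

Variables (d nx na : nat).

Lemma sandwich_sum n (S : 'M[C]_d) (M : 'I_n -> 'M[C]_d) :
  \sum_a S *m M a *m S = S *m (\sum_a M a) *m S.
Proof. by rewrite mulmx_sumr mulmx_suml. Qed.

Lemma sandwich_mixt (S A B : 'M[C]_d) t :
  S *m mixt t A B *m S = mixt t (S *m A *m S) (S *m B *m S).
Proof.
by rewrite /mixt -scalemxAr -scalemxAl mulmxDr mulmxDl -scalemxAr -scalemxAl.
Qed.

Lemma JM_MA (D : 'I_nx -> 'I_na -> 'M[C]_d) : JM D -> MA D.
Proof.
case=> k [G [p [psdG sumG [p_ge0 sum_p] D_def]]]; split=> [x a|x].
  rewrite D_def; apply: (big_ind (@psd R d)) => [|A B|l _]; [exact: psd0 | exact: psdD |].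
  exact: psdZ.
under eq_bigr => a _ do rewrite D_def.
rewrite exchange_big /= -[RHS]sumG; apply: eq_bigr => l _.
by rewrite -scaler_suml -rmorph_sum sum_p scale1r.
Qed.

Lemma sandwich_SA_with (S : 'M[C]_d) (M : 'I_nx -> 'I_na -> 'M[C]_d) :
  psd S -> density (S *m S) -> MA M -> SA_with (sandwich S M) (S *m S).
Proof.
move=> psdS [_ tr1] [psdM sumM]; split=> // [x a|x].
  exact: psd_sandwich.
by rewrite /sandwich sandwich_sum sumM mulmx1.
Qed.

Lemma sandwich_JM_LHS (S : 'M[C]_d) (D : 'I_nx -> 'I_na -> 'M[C]_d) :
  psd S -> density (S *m S) -> JM D -> is_LHS (sandwich S D).
Proof.
move=> psdS rho_dens [k [G [p [psdG sumG p_distr D_def]]]].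
pose q l := \tr (S *m G l *m S).
have psdSGS l : psd (S *m G l *m S) by apply: psd_sandwich.
have q_real l : q l = (complex.Re (q l))%:C by apply: mxtrace_psd_real.
pose pl l := complex.Re (q l).
(* a zero-weight hidden state is irrelevant; any density operator will do *)
pose rhol l := if pl l == 0 then S *m S else (pl l)^-1%:C *: (S *m G l *m S).
exists k, pl, p, rhol; split=> // [l||l|x a].
- by rewrite -ler0c -q_real psd_mxtrace_ge0.
- apply: complexI; rewrite rmorph_sum rmorph1.
  transitivity (\sum_l q l); first by apply: eq_bigr => l _; rewrite q_real.
  by rewrite /q -linear_sum /= sandwich_sum sumG mulmx1 rho_dens.2.
- rewrite /rhol; case: eqP => [// | /eqP pl_neq0].
  split; first by apply: psdZ; rewrite // invr_ge0 -ler0c -q_real psd_mxtrace_ge0.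
  by rewrite mxtraceZ -/(q l) q_real -rmorphM mulVf.
- rewrite /sandwich D_def mulmx_sumr mulmx_suml; apply: eq_bigr => l _.
  rewrite -scalemxAr -scalemxAl /rhol; case: eqP => [pl0 | /eqP pl_neq0].
    have -> : S *m G l *m S = 0.
      by apply: psd_mxtrace_eq0; rewrite // -/(q l) q_real -/(pl l) pl0.
    by rewrite pl0 mul0r scale0r scaler0.
  by rewrite scalerA -rmorphM mulrAC mulfV ?mul1r.
Qed.

End Assemblages.

Theorem mainTheorem2 (R : realType) (d nx na : nat)
    (B : 'I_nx -> 'I_na -> 'M[R[i]]_d) (rhoB S : 'M[R[i]]_d) (t : R) :
  MA B -> density rhoB ->
  psd S -> S *m S = rhoB ->
  is_SR (sandwich S B) t -> is_IR B t ->
  exists xi tau : 'I_nx -> 'I_na -> 'M[R[i]]_d,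
    [/\ SA_with xi rhoB, SA_with tau rhoB, is_LHS tau &
        (forall x a, mixt t (sandwich S B x a) (xi x a) = tau x a)].
Proof.
move=> MA_B rho_dens psdS SS_rho _ [[_ [N [D [MA_N JM_D mixND]]]] _].
subst rhoB.
exists (sandwich S N), (sandwich S D); split.
- exact: sandwich_SA_with.
- by apply: sandwich_SA_with => //; apply: JM_MA.
- exact: sandwich_JM_LHS.
- by move=> x a; rewrite /sandwich -sandwich_mixt mixND.
Qed.
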